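(* $\mathsf{ICM}$ is a variety. It is axiomatized by the axioms of commutative (unital) rings together with the equations $$x\approx x^2x^*,\qquad x\approx x^{**},\qquad (r_p(x))^p\approx(1-p^*p)\,x\quad\text{for every prime }p,$$ where $p$ denotes the term $1+\dots+1$ ($p$ summands).
   Context: The language is $\{+,\cdot,-,0,1,(\,)^*\}\cup\{r_p:p\text{ prime}\}$ with $(\,)^*$ and $r_p$ unary. A field is weakly rooted if it has characteristic $0$, or has prime characteristic $p$ and every element has a $p$-th root. Weak inverse: $a^*=a^{-1}$ if $a\ne0$, $0^*=0$. Weak $p$-root (in a weakly rooted field): $r_p(a)=\sqrt[p]{a}$ if the characteristic is $p$, and $0$ otherwise. An implicitly closed field is a weakly rooted field expanded by $(\,)^*$ and all $r_p$. $\mathsf{ICM}$ is the class of algebras isomorphic to subalgebras of direct products of implicitly closed fields. *)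

From HB Require Import structures.
From mathcomp Require Import all_boot all_order all_algebra.
Set Implicit Arguments. Unset Strict Implicit. Unset Printing Implicit Defensive.
Import GRing.Theory.
Local Open Scope ring_scope.

(* The root operations are packaged as a nat-indexed family; only the
   components at prime indices are part of the signature (homomorphisms
   and axioms only ever refer to r_p with p prime). *)
Record alg := Alg {
  carrier :> Type;
  a_add : carrier -> carrier -> carrier;
  a_mul : carrier -> carrier -> carrier;
  a_opp : carrier -> carrier;
  a_zero : carrier;
  a_one : carrier;
  a_star : carrier -> carrier;
  a_root : nat -> carrier -> carrier }.

Definition is_hom (A B : alg) (f : A -> B) : Prop :=
  (forall x y, f (a_add x y) = a_add (f x) (f y))
  /\ (forall x y, f (a_mul x y) = a_mul (f x) (f y))
  /\ (forall x, f (a_opp x) = a_opp (f x))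
  /\ f (a_zero A) = a_zero B
  /\ f (a_one A) = a_one B
  /\ (forall x, f (a_star x) = a_star (f x))
  /\ (forall p, prime p -> forall x, f (a_root p x) = a_root p (f x)).

(* Implicitly closed field: a field F with weak p-roots r_p for every prime p:
   r_p x is a p-th root of x when char F = p, and 0 otherwise.  The existence
   of such r is exactly the weakly-rooted condition (a field has characteristic
   0 or a prime).  The weak inverse is MathComp's field inverse (0^-1 = 0). *)
Record icf := ICF {
  icf_F : fieldType;
  icf_r : nat -> icf_F -> icf_F;
  icf_rP : forall p, prime p -> forall x : icf_F,
    if p \in [pchar icf_F] then icf_r p x ^+ p = x else icf_r p x = 0 }.

Definition alg_of_icf (K : icf) : alg :=
  @Alg (icf_F K) +%R *%R (fun x => - x) 0 1 GRing.inv (@icf_r K).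

Definition prod_alg (I : Type) (K : I -> icf) : alg :=
  @Alg (forall i, icf_F (K i))
    (fun f g i => f i + g i)
    (fun f g i => f i * g i)
    (fun f i => - f i)
    (fun i => 0)
    (fun i => 1)
    (fun f i => (f i)^-1)
    (fun p f i => @icf_r (K i) p (f i)).

(* A is in ICM: isomorphic to a subalgebra of a direct product of implicitly
   closed fields, i.e. there is an injective homomorphism into such a product. *)
Definition in_ICM (A : alg) : Prop :=
  exists (I : Type) (K : I -> icf) (f : A -> prod_alg K),
    is_hom f /\ injective f.

Definition a_nat (A : alg) (n : nat) : A :=
  iter n (fun y => a_add y (a_one A)) (a_zero A).
Definition a_pow (A : alg) (x : A) (n : nat) : A :=
  iter n (a_mul x) (a_one A).

Definition comm_ring_axioms (A : alg) : Prop :=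
  (forall x y z : A, a_add x (a_add y z) = a_add (a_add x y) z)
  /\ (forall x y : A, a_add x y = a_add y x)
  /\ (forall x : A, a_add (a_zero A) x = x)
  /\ (forall x : A, a_add (a_opp x) x = a_zero A)
  /\ (forall x y z : A, a_mul x (a_mul y z) = a_mul (a_mul x y) z)
  /\ (forall x y : A, a_mul x y = a_mul y x)
  /\ (forall x : A, a_mul (a_one A) x = x)
  /\ (forall x y z : A, a_mul x (a_add y z) = a_add (a_mul x y) (a_mul x z)).

Definition ICM_axioms (A : alg) : Prop :=
  comm_ring_axioms A
  /\ (forall x : A, x = a_mul (a_mul x x) (a_star x))
  /\ (forall x : A, x = a_star (a_star x))
  /\ (forall p, prime p -> forall x : A,
         a_pow (a_root p x) p =
         a_mul (a_add (a_one A) (a_opp (a_mul (a_star (a_nat A p)) (a_nat A p)))) x).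

From HB Require Import structures.
From mathcomp Require Import all_boot all_order all_algebra.
From mathcomp Require Import boolp classical_sets.
From mathcomp Require Import ring.
Set Implicit Arguments. Unset Strict Implicit. Unset Printing Implicit Defensive.
Import GRing.Theory.
Local Open Scope ring_scope.
Local Open Scope quotient_scope.

(* Soundness: the axioms hold in every implicitly closed field (in characteristic p
   we have p^* p = 0 and r_p is a p-th root; otherwise p^* p = 1 and r_p x = 0), and
   equations pass to products and subalgebras.

   Completeness: in a model R, e = x x^* is idempotent for every x.  For z <> 0, an
   ideal M maximal among those avoiding e = z z^* satisfies 1 - a a^* \in M for every
   a \notin M: otherwise, with f = a a^*, maximality puts e into both M + R f and
   M + R (1 - f), whose product lies in M as f (1 - f) = 0, so e = e e \in M.  Hence
   R/M is a field in which x^* is the inverse of x.  In R/M the equation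
   r_p(x)^p = (1 - p^* p) x determines r_p(x): in characteristic p because Frobenius
   is injective, and otherwise because it forces r_p(x)^p = 0.  So r_p descends to
   R/M, and R embeds into the product of the fields R/M. *)

Section WeakRoots.
Variables (F : fieldType) (p : nat).
Hypothesis p_prime : prime p.

Lemma weak_root_eqn (r x : F) :
  (if p \in [pchar F] then r ^+ p = x else r = 0) <->
  r ^+ p = (1 - p%:R^-1 * p%:R) * x.
Proof.
case: ifPn => [pF | pF'].
  by rewrite (pcharf0 pF) mulr0 subr0 mul1r.
have p_neq0 : p%:R != 0 :> F by apply: contra pF' => p0; rewrite inE p_prime.
rewrite mulVf // subrr mul0r; split => [->|/eqP].
  by rewrite expr0n gtn_eqF ?prime_gt0.
by rewrite expf_eq0 prime_gt0 // => /eqP.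
Qed.

Lemma weak_root_unique (r s x : F) :
  r ^+ p = (1 - p%:R^-1 * p%:R) * x -> s ^+ p = (1 - p%:R^-1 * p%:R) * x ->
  r = s.
Proof.
move=> /weak_root_eqn + /weak_root_eqn; case: ifP => [pF | _ -> //] rx sx.
by apply: (fmorph_inj (pFrobenius_aut pF)); exact: etrans rx (esym sx).
Qed.

End WeakRoots.

Lemma hom_a_nat (A B : alg) (f : A -> B) : is_hom f ->
  forall n, f (a_nat A n) = a_nat B n.
Proof.
case=> f_add [_ [_ [f_zero [f_one _]]]]; elim=> [|n IHn] //=.
by rewrite f_add IHn f_one.
Qed.

Lemma hom_a_pow (A B : alg) (f : A -> B) : is_hom f ->
  forall x n, f (a_pow x n) = a_pow (f x) n.
Proof.
case=> _ [f_mul [_ [_ [f_one _]]]] x; elim=> [|n IHn] //=.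
by rewrite f_mul IHn.
Qed.

Lemma ICM_axioms_inj_hom (A B : alg) (f : A -> B) : is_hom f -> injective f ->
  ICM_axioms B -> ICM_axioms A.
Proof.
move=> f_hom f_inj; have f_nat := hom_a_nat f_hom; have f_pow := hom_a_pow f_hom.
case: f_hom => f_add [f_mul [f_opp [f_zero [f_one [f_star f_root]]]]].
case=> [[addA [addC [add0 [addN [mulA [mulC [mul1 mulD]]]]]]]].
move=> [mul_star [starK root_eqn]].
split; first split; last split; last split.
- by move=> x y z; apply: f_inj; rewrite !f_add addA.
- split; first by move=> x y; apply: f_inj; rewrite !f_add addC.
  split; first by move=> x; apply: f_inj; rewrite f_add f_zero add0.
  split; first by move=> x; apply: f_inj; rewrite f_add f_opp f_zero addN.
  split; first by move=> x y z; apply: f_inj; rewrite !f_mul mulA.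
  split; first by move=> x y; apply: f_inj; rewrite !f_mul mulC.
  split; first by move=> x; apply: f_inj; rewrite f_mul f_one mul1.
  by move=> x y z; apply: f_inj; rewrite !(f_mul, f_add) mulD.
- by move=> x; apply: f_inj; rewrite !(f_mul, f_star) -mul_star.
- by move=> x; apply: f_inj; rewrite !f_star -starK.
- move=> p p_prime x; apply: f_inj.
  by rewrite f_pow f_root // !(f_mul, f_add, f_opp, f_star, f_one, f_nat) root_eqn.
Qed.

Lemma icf_root_eqn (K : icf) p : prime p -> forall x : icf_F K,
  @icf_r K p x ^+ p = (1 - p%:R^-1 * p%:R) * x.
Proof. by move=> p_prime x; apply/(weak_root_eqn p_prime)/icf_rP. Qed.

Lemma prod_alg_ICM_axioms (I : Type) (K : I -> icf) : ICM_axioms (prod_alg K).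
Proof.
have fe := @functional_extensionality_dep.
have prod_nat n : a_nat (prod_alg K) n = fun i => n%:R.
  by elim: n => [|n IHn] //=; rewrite IHn; apply: fe => i; rewrite mulrSr.
have prod_pow (x : prod_alg K) n : a_pow x n = fun i => x i ^+ n.
  by elim: n => [|n IHn] //=; rewrite IHn; apply: fe => i; rewrite exprS.
split; first split; last split; last split.
- by move=> x y z; apply: fe => i /=; rewrite addrA.
- split; first by move=> x y; apply: fe => i /=; rewrite addrC.
  split; first by move=> x; apply: fe => i /=; rewrite add0r.
  split; first by move=> x; apply: fe => i /=; rewrite addNr.
  split; first by move=> x y z; apply: fe => i /=; rewrite mulrA.
  split; first by move=> x y; apply: fe => i /=; rewrite mulrC.
  split; first by move=> x; apply: fe => i /=; rewrite mul1r.
  by move=> x y z; apply: fe => i /=; rewrite mulrDr.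
- move=> x; apply: fe => i /=.
  by have [->|x_neq0] := eqVneq (x i) 0; rewrite ?mul0r // mulfK.
- by move=> x; apply: fe => i /=; rewrite invrK.
- by move=> p p_prime x; rewrite prod_pow prod_nat; apply: fe => i; apply: icf_root_eqn.
Qed.

Section AvoidingIdeals.
Variable R : comNzRingType.
Local Open Scope classical_set_scope.

Definition avoiding_ideal (e : R) (J : set R) :=
  [/\ forall x y, J x -> J y -> J (x - y), forall r x, J x -> J (r * x) & ~ J e].

Lemma exists_maximal_avoiding_ideal (e : R) :
  exists M, avoiding_ideal e M /\ forall J, M `<` J -> ~ avoiding_ideal e J.
Proof.
apply: Zorn_bigcup => F FP Ftot; split.
- move=> x y [X FX Xx] [Y FY Yy].
  have [XY|YX] := Ftot _ _ FX FY.
    by exists Y => //; case: (FP _ FY) => + _ _; apply; first exact: XY.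
  by exists X => //; case: (FP _ FX) => + _ _; apply; last exact: YX.
- by move=> r x [X FX Xx]; exists X => //; case: (FP _ FX) => _ + _; apply.
- by move=> [X FX Xe]; case: (FP _ FX).
Qed.

Section MaximalAvoiding.
Variables (e : R) (M : set R).
Hypotheses (e_neq0 : e != 0) (M_avoid : avoiding_ideal e M)
  (M_max : forall J, M `<` J -> ~ avoiding_ideal e J).

Let MB : forall x y, M x -> M y -> M (x - y). Proof. by case: M_avoid. Qed.
Let MM : forall r x, M x -> M (r * x). Proof. by case: M_avoid. Qed.
Let Me : ~ M e. Proof. by case: M_avoid. Qed.

Lemma maximal_avoiding0 : M 0.
Proof.
apply: contrapT => M0'; apply: (M_max (J := M `|` [set 0])).
  by split; [exact: subsetUl | move=> /(_ 0 (or_intror erefl))].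
split.
- move=> x y [Mx|->] [My|->]; rewrite ?subr0 ?sub0r; try by left.
  + by left; apply: MB.
  + by left; rewrite -mulN1r; apply: MM.
  + by right.
- by move=> r x [Mx|->]; [left; apply: MM | right; rewrite mulr0].
- by move=> [//|/eqP]; rewrite (negbTE e_neq0).
Qed.

Lemma maximal_avoidingD x y : M x -> M y -> M (x + y).
Proof. by move=> Mx My; have := MB Mx (MM (-1) My); rewrite mulN1r opprK. Qed.

Lemma maximal_avoiding_saturated t : ~ M t -> exists r, M (e - r * t).
Proof.
move=> Mt'; apply: contrapT => noR.
apply: (M_max (J := fun u => exists r, M (u - r * t))).
  split; first by move=> u Mu; exists 0; rewrite mul0r subr0.
  move=> /(_ t) JM; apply/Mt'/JM; exists 1.
  by rewrite mul1r subrr; apply: maximal_avoiding0.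
split.
- move=> x y [r Mr] [s Ms]; exists (r - s).
  by rewrite (_ : _ - _ = (x - r * t) - (y - s * t)); [apply: MB | ring].
- move=> r' x [r Mr]; exists (r' * r).
  by rewrite (_ : _ - _ = r' * (x - r * t)); [apply: MM | ring].
- exact: noR.
Qed.

End MaximalAvoiding.
End AvoidingIdeals.

Section StarRegularRing.
Local Open Scope classical_set_scope.
Variables (R : comNzRingType) (star : R -> R).
Hypotheses (mul_star : forall x, x * x * star x = x) (starK : involutive star).

Lemma star_mul_star x : star x * star x * x = star x.
Proof. by have := mul_star (star x); rewrite starK. Qed.

Lemma mul_star_idem x : x * star x * (x * star x) = x * star x.
Proof. by transitivity (x * x * star x * star x); [ring | rewrite mul_star]. Qed.

Lemma maximal_avoiding_star (e : R) (M : set R) : e * e = e -> e != 0 ->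
  avoiding_ideal e M -> (forall J, M `<` J -> ~ avoiding_ideal e J) ->
  forall a, ~ M a -> M (1 - a * star a).
Proof.
move=> e_idem e_neq0 M_avoid M_max a Ma'; have [MB MM Me] := M_avoid.
have MD := maximal_avoidingD M_avoid.
have sat := maximal_avoiding_saturated e_neq0 M_avoid M_max.
apply: contrapT => M1f'; set f := a * star a in M1f'.
have Mf' : ~ M f by move=> Mf; apply: Ma'; rewrite -[a]mul_star -mulrA; apply: MM.
have [[r Mr] [s Ms]] := (sat _ Mf', sat _ M1f').
apply: Me; suff -> : e = e * (e - s * (1 - f)) + s * (1 - f) * (e - r * f).
  by apply: MD; apply: MM.
transitivity (e * e - r * s * (f - f * f)); last by ring.
by rewrite e_idem mul_star_idem subrr mulr0 subr0.
Qed.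

Record field_ideal := FieldIdeal {
  fideal :> R -> Prop;
  fideal0 : fideal 0;
  fidealB : forall x y, fideal x -> fideal y -> fideal (x - y);
  fidealMl : forall r x, fideal x -> fideal (r * x);
  fideal1 : ~ fideal 1;
  fideal_star : forall a, ~ fideal a -> fideal (1 - a * star a) }.

Lemma exists_field_ideal z : z != 0 -> exists M : field_ideal, ~ M z.
Proof.
move=> z_neq0; pose e := z * star z.
have e_neq0 : e != 0.
  by apply: contraNneq z_neq0 => e0; rewrite -[z]mul_star -mulrA -/e e0 mulr0.
have [M [M_avoid M_max]] := exists_maximal_avoiding_ideal e.
have [MB MM Me] := M_avoid.
have M1 : ~ M 1 by move=> M1; apply: Me; rewrite -(mulr1 e); apply: MM.
have M_star := maximal_avoiding_star (mul_star_idem z) e_neq0 M_avoid M_max.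
exists (FieldIdeal (maximal_avoiding0 e_neq0 M_avoid M_max) MB MM M1 M_star).
by move=> /= Mz; apply: Me; rewrite /e mulrC; exact: MM.
Qed.

Section ResidueField.
Variable M : field_ideal.

Lemma fidealN x : M x -> M (- x).
Proof. by move=> Mx; rewrite -mulN1r; apply: fidealMl. Qed.

Lemma fideal_star_closed x : M x -> M (star x).
Proof. by move=> Mx; rewrite -star_mul_star; apply: fidealMl. Qed.

Definition fideal_pred : pred R := fun x => `[< M x >].

Lemma fideal_pred_idealr_closed : idealr_closed fideal_pred.
Proof.
split; first exact/asboolP/fideal0.
  exact/asboolP/fideal1.
move=> a x y /asboolP Mx /asboolP My; apply/asboolP.
by rewrite -[y]opprK; apply: fidealB; [apply: fidealMl | apply: fidealN].
Qed.

Definition fideal_idealr : idealr R :=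
  HB.pack fideal_pred (isIdealr.Build R fideal_pred fideal_pred_idealr_closed).

Local Notation K := {ideal_quot fideal_idealr}.

Lemma pi_eq0P x : reflect (M x) (\pi_K x == 0).
Proof. by rewrite -(rmorph0 \pi_K) -Quotient.idealrBE subr0; apply: asboolP. Qed.

Lemma pi_star_mul x : ~ M x -> \pi_K (star x) * \pi_K x = 1.
Proof.
move=> Mx'; apply/eqP; rewrite -subr_eq0 -rmorphM -(rmorph1 \pi_K) -rmorphB.
by apply/pi_eq0P; rewrite -opprB mulrC; apply/fidealN/fideal_star.
Qed.

Definition residue_inv (q : K) : K := \pi_K (star (repr q)).

Lemma residue_mulVf (q : K) : q != 0 -> residue_inv q * q = 1.
Proof.
move=> q_neq0; rewrite /residue_inv -{2}[q]reprK pi_star_mul //.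
by move=> /pi_eq0P; rewrite reprK (negbTE q_neq0).
Qed.

Lemma residue_inv0 : residue_inv 0 = 0.
Proof.
apply/eqP/pi_eq0P/fideal_star_closed/pi_eq0P.
by rewrite reprK.
Qed.

HB.instance Definition _ := GRing.ComNzRing_isField.Build K residue_mulVf residue_inv0.

Lemma pi_star x : \pi_K (star x) = (\pi_K x)^-1.
Proof.
have [pix0 | pix_neq0] := eqVneq (\pi_K x) 0.
  rewrite pix0 invr0; apply/eqP/pi_eq0P/fideal_star_closed/pi_eq0P.
  by rewrite pix0.
apply: (mulIf pix_neq0); rewrite mulVf // pi_star_mul //.
by move/pi_eq0P; rewrite (negbTE pix_neq0).
Qed.

Definition residue_field : fieldType := K.

Section ResidueRoots.
Variable root : nat -> R -> R.
Hypothesis root_eqn : forall p, prime p -> forall x,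
  root p x ^+ p = (1 - star p%:R * p%:R) * x.

Lemma pi_root_eqn p x : prime p ->
  \pi_K (root p x) ^+ p = (1 - p%:R^-1 * p%:R) * \pi_K x.
Proof.
move=> p_prime.
by rewrite -rmorphXn root_eqn // rmorphM rmorphB rmorph1 rmorphM /= pi_star rmorph_nat.
Qed.

Definition residue_root p (q : K) : K := \pi_K (root p (repr q)).

Lemma pi_root p x : prime p -> residue_root p (\pi_K x) = \pi_K (root p x).
Proof.
move=> p_prime; apply: (weak_root_unique p_prime (x := \pi_K x)).
  by rewrite pi_root_eqn // reprK.
exact: pi_root_eqn.
Qed.

Lemma residue_rootP p : prime p -> forall q : residue_field,
  if p \in [pchar residue_field] then residue_root p q ^+ p = q
  else residue_root p q = 0.
Proof.
by move=> p_prime q; apply/(weak_root_eqn p_prime); rewrite pi_root_eqn // reprK.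
Qed.

Definition residue_icf : icf := ICF residue_rootP.

End ResidueRoots.
End ResidueField.

Lemma residue_separation x y :
  (forall M : field_ideal, \pi_{ideal_quot fideal_idealr M} x = \pi y) -> x = y.
Proof.
move=> pi_xy; apply/eqP; rewrite -subr_eq0; apply/negP => /negP xy_neq0.
have [M Mxy'] := exists_field_ideal xy_neq0; apply: Mxy'.
by apply/pi_eq0P; rewrite rmorphB /= pi_xy subrr.
Qed.

End StarRegularRing.

Definition ICM_ring (A : alg) of ICM_axioms A : Type := carrier A.
HB.instance Definition _ (A : alg) (H : ICM_axioms A) := gen_eqMixin (ICM_ring H).
HB.instance Definition _ (A : alg) (H : ICM_axioms A) := gen_choiceMixin (ICM_ring H).

Section ICMRingAxioms.
Variables (A : alg) (H : ICM_axioms A).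

Lemma ICM_addA : associative (@a_add A). Proof. by case: H => -[]. Qed.
Lemma ICM_addC : commutative (@a_add A). Proof. by case: H => -[_ []]. Qed.
Lemma ICM_add0 : left_id (a_zero A) (@a_add A). Proof. by case: H => -[_ [_ []]]. Qed.
Lemma ICM_addN : left_inverse (a_zero A) (@a_opp A) (@a_add A).
Proof. by case: H => -[_ [_ [_ []]]]. Qed.
Lemma ICM_mulA : associative (@a_mul A). Proof. by case: H => -[_ [_ [_ [_ []]]]]. Qed.
Lemma ICM_mulC : commutative (@a_mul A).
Proof. by case: H => -[_ [_ [_ [_ [_ []]]]]]. Qed.
Lemma ICM_mul1 : left_id (a_one A) (@a_mul A).
Proof. by case: H => -[_ [_ [_ [_ [_ [_ []]]]]]]. Qed.
Lemma ICM_mulDl : left_distributive (@a_mul A) (@a_add A).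
Proof.
move=> x y z; case: H => -[_ [_ [_ [_ [_ [mulC [_ mulD]]]]]]] _.
by rewrite mulC mulD !(mulC z).
Qed.

End ICMRingAxioms.

HB.instance Definition _ (A : alg) (H : ICM_axioms A) :=
  GRing.isZmodule.Build (ICM_ring H) (ICM_addA H) (ICM_addC H) (ICM_add0 H) (ICM_addN H).
HB.instance Definition _ (A : alg) (H : ICM_axioms A) :=
  GRing.Zmodule_isComPzRing.Build (ICM_ring H)
    (ICM_mulA H) (ICM_mulC H) (ICM_mul1 H) (ICM_mulDl H).

Section ICMRing.
Variables (A : alg) (H : ICM_axioms A).
Local Notation R := (ICM_ring H).

Lemma ICM_ring_nat n : a_nat A n = n%:R :> R.
Proof. by elim: n => [|n IHn] //; rewrite mulrSr -IHn. Qed.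

Lemma ICM_ring_pow (x : R) n : a_pow x n = x ^+ n.
Proof. by elim: n => [|n IHn] //; rewrite exprS -IHn. Qed.

Lemma ICM_mul_star (x : R) : x * x * a_star x = x.
Proof. by have [_ [mul_star _]] := H; exact: esym (mul_star x). Qed.

Lemma ICM_starK : involutive (@a_star A : R -> R).
Proof. by have [_ [_ [starK _]]] := H; move=> x; exact: esym (starK x). Qed.

Lemma ICM_root_eqn p : prime p -> forall x : R,
  (a_root p x : R) ^+ p = (1 - (a_star (p%:R : R) : R) * p%:R) * x.
Proof.
have [_ [_ [_ root_eqn]]] := H; move=> p_prime x.
by rewrite -ICM_ring_pow root_eqn // ICM_ring_nat.
Qed.

End ICMRing.

(* The quotient rings of ring_quotient require a nontrivial base ring. *)
Definition nz_ring (R : comPzRingType) of (1 : R) != 0 : Type := R.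
HB.instance Definition _ (R : comPzRingType) (R_nz : (1 : R) != 0) :=
  GRing.ComPzRing.on (nz_ring R_nz).
HB.instance Definition _ (R : comPzRingType) (R_nz : (1 : R) != 0) :=
  GRing.PzSemiRing_isNonZero.Build (nz_ring R_nz) R_nz.

Lemma in_ICM_subsingleton (A : alg) : (forall x y : A, x = y) -> in_ICM A.
Proof.
move=> A_triv; exists void, (fun i : void => match i with end).
exists (fun _ (i : void) => match i with end).
split=> [|x y _]; last exact: A_triv.
by do ![split | move=> *; apply: functional_extensionality_dep; case].
Qed.

Lemma ICM_nontrivial_in_ICM (A : alg) (H : ICM_axioms A) :
  (1 : ICM_ring H) != 0 -> in_ICM A.
Proof.
move=> one_neq0; pose R := nz_ring one_neq0; pose star : R -> R := @a_star A.
have mul_star : forall x : R, x * x * star x = x := @ICM_mul_star A H.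
have starK : involutive star := @ICM_starK A H.
have root_eqn : forall p, prime p -> forall x : R,
  (a_root p x : R) ^+ p = (1 - star p%:R * p%:R) * x := @ICM_root_eqn A H.
have fe := @functional_extensionality_dep.
exists (field_ideal star), (fun M => residue_icf mul_star starK M root_eqn).
exists (fun x M => \pi_{ideal_quot fideal_idealr M} (x : R)); split; last first.
  by move=> x y /(congr1 (fun f => f _)) pi_xy; apply: (residue_separation mul_star).
split; first by move=> x y; apply: fe => M; exact: rmorphD.
split; first by move=> x y; apply: fe => M; exact: rmorphM.
split; first by move=> x; apply: fe => M; exact: rmorphN.
split; first by apply: fe => M; exact: rmorph0.
split; first by apply: fe => M; exact: rmorph1.
split; first by move=> x; apply: fe => M; exact: pi_star.
by move=> p p_prime x; apply: fe => M; symmetry; exact: pi_root.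
Qed.

Theorem mainTheorem5 : forall A : alg, in_ICM A <-> ICM_axioms A.
Proof.
move=> A; split=> [[I [K [f [f_hom f_inj]]]] | H].
  exact: ICM_axioms_inj_hom f_hom f_inj (prod_alg_ICM_axioms K).
have [one_eq0 | one_neq0] := eqVneq (1 : ICM_ring H) 0; last first.
  exact: ICM_nontrivial_in_ICM one_neq0.
have triv (x : ICM_ring H) : x = 0 by rewrite -[x]mulr1 one_eq0 mulr0.
by apply: in_ICM_subsingleton => x y; rewrite (triv x) (triv y).
Qed.
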